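(* Let $\Omega\subseteq\mathbb{R}^n$ be open and $u:\Omega\to\mathbb{R}^N$ continuous. (1) Let $F:\Omega\times\mathbb{R}^N\times\mathbb{R}^{N\times n}\times(\mathbb{R}^N\otimes\mathbb{R}^{n\times n}_s)\to\mathbb{R}^N$ be locally bounded. Then $u$ is a contact solution of $F(\cdot,u,Du,D^2u)=0$ on $\Omega$ if and only if for every $x\in\Omega$, $\xi\in\mathbb{S}^{N-1}$ and $(P,\mathbf{X})\in J^{2,\xi}u(x)$ one has $\xi^*F(x,u(x),P,\mathbf{X})\ge0$. (2) Let $F:\Omega\times\mathbb{R}^N\times\mathbb{R}^{N\times n}\to\mathbb{R}^N$ be locally bounded. Then $u$ is a contact solution of $F(\cdot,u,Du)=0$ on $\Omega$ if and only if for every $x\in\Omega$, $\xi\in\mathbb{S}^{N-1}$ and $P\in J^{1,\xi}u(x)$ one has $\xi^*F(x,u(x),P)\ge0$. If moreover $F$ is continuous, then in both characterisations $\xi^*F$ may be replaced by $\xi^\top F$.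
   Context: $\mathbb{R}^N\otimes\mathbb{R}^{n\times n}_s$: arrays $\mathbf{X}=(\mathbf{X}_{\alpha ij})$ symmetric in $i,j$; $\mathbf{X}:z\otimes z$ has components $\sum_{ij}\mathbf{X}_{\alpha ij}z_iz_j$. For $a,b\in\mathbb{R}^N$, $a\vee b:=\frac12(a\otimes b+b\otimes a)$; matrix inequalities in the sense of quadratic forms. Contact jets: $J^{1,\xi}u(x)$ is the set of $P\in\mathbb{R}^{N\times n}$ for which there is a continuous $T:\mathbb{R}^n\setminus\{0\}\to\mathbb{R}^{N\times N}_s$ with $|T(y)|\to0$ as $y\to0$ and $\xi\vee[u(z)-u(x)-P(z-x)]\le|z-x|T(z-x)$ for $z\ne x$ near $x$; $J^{2,\xi}u(x)$ is the set of $(P,\mathbf{X})$ with such a $T$ and $\xi\vee[u(z)-u(x)-P(z-x)-\frac12\mathbf{X}:(z-x)\otimes(z-x)]\le|z-x|^2T(z-x)$ for $z\ne x$ near $x$. Closures: $\bar J^{1,\xi}u(x)$ is the set of $P$ for which there are $\xi_m\in\mathbb{S}^{N-1}$, $x_m\in\Omega$, $P_m\in J^{1,\xi_m}u(x_m)$ with $(\xi_m,x_m,P_m)\to(\xi,x,P)$; $\bar J^{2,\xi}u(x)$ is defined analogously with $(P_m,\mathbf{X}_m)\in J^{2,\xi_m}u(x_m)$ converging to $(P,\mathbf{X})$. $\xi$-envelope: $\xi^*F$ is the upper semicontinuous envelope of $\xi^\top F$, i.e. $\xi^*F(p):=\limsup_{\varepsilon\to0}\sup\{\xi^\top F(q):|p-q|\le\varepsilon\}$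 where $p,q$ denote the full argument tuples. Contact solutions: $u$ is a contact solution of $F(\cdot,u,Du,D^2u)=0$ if for all $x\in\Omega$, $\xi\in\mathbb{S}^{N-1}$, $(P,\mathbf{X})\in\bar J^{2,\xi}u(x)$ we have $\xi^*F(x,u(x),P,\mathbf{X})\ge0$; $u$ is a contact solution of $F(\cdot,u,Du)=0$ if for all $x,\xi$ and $P\in\bar J^{1,\xi}u(x)$ we have $\xi^*F(x,u(x),P)\ge0$. *)

From HB Require Import structures.
From mathcomp Require Import all_boot all_order all_algebra.
From mathcomp Require Import all_classical all_reals ereal.
Set Implicit Arguments. Unset Strict Implicit. Unset Printing Implicit Defensive.
Import Order.TTheory GRing.Theory Num.Theory.
Local Open Scope ring_scope.

Section Defs.
Variables (R : realType) (n N : nat).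

Definition vecn := 'I_n -> R.
Definition vecN := 'I_N -> R.
Definition matNn := 'I_N -> 'I_n -> R.
Definition tenN := 'I_N -> 'I_n -> 'I_n -> R.
Definition matNN := 'I_N -> 'I_N -> R.

Definition sqv {k} (v : 'I_k -> R) := \sum_(i < k) v i ^+ 2.
Definition sqm {k l} (M : 'I_k -> 'I_l -> R) := \sum_(i < k) \sum_(j < l) M i j ^+ 2.
Definition sqt (X : tenN) := \sum_(a < N) \sum_(i < n) \sum_(j < n) X a i j ^+ 2.
Definition nrmv {k} (v : 'I_k -> R) := Num.sqrt (sqv v).
Definition nrmm {k l} (M : 'I_k -> 'I_l -> R) := Num.sqrt (sqm M).
Definition nrmt (X : tenN) := Num.sqrt (sqt X).

Definition vsub {k} (v w : 'I_k -> R) : 'I_k -> R := fun i => v i - w i.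
Definition msub {k l} (M M' : 'I_k -> 'I_l -> R) : 'I_k -> 'I_l -> R :=
  fun i j => M i j - M' i j.
Definition tsub (X Y : tenN) : tenN := fun a i j => X a i j - Y a i j.
Definition dot {k} (v w : 'I_k -> R) := \sum_(i < k) v i * w i.

Definition Papp (P : matNn) (z : vecn) : vecN := fun a => \sum_(j < n) P a j * z j.
Definition Xcol (X : tenN) (z : vecn) : vecN :=
  fun a => \sum_(i < n) \sum_(j < n) X a i j * z i * z j.
Definition symX (X : tenN) := forall a i j, X a i j = X a j i.
Definition symNN (M : matNN) := forall a b, M a b = M b a.

Definition vee (a b : vecN) : matNN := fun i j => (a i * b j + b i * a j) / 2.
Definition qf (M : matNN) (eta : vecN) := \sum_(a < N) \sum_(b < N) M a b * eta a * eta b.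
Definition mle (M M' : matNN) := forall eta : vecN, qf M eta <= qf M' eta.
Definition mscale (c : R) (M : matNN) : matNN := fun a b => c * M a b.

Definition unit_sphere (xi : vecN) := nrmv xi = 1.

Definition open_set (Om : set vecn) :=
  forall x, Om x -> exists r, 0 < r /\ forall y, nrmv (vsub y x) < r -> Om y.
Definition cont_on (Om : set vecn) (u : vecn -> vecN) :=
  forall x, Om x -> forall e, 0 < e -> exists d, 0 < d /\
    forall y, Om y -> nrmv (vsub y x) < d -> nrmv (vsub (u y) (u x)) < e.

Definition admissible_T (T : vecn -> matNN) :=
  (forall y, symNN (T y)) /\
  (forall y, y <> (fun _ => 0) -> forall e, 0 < e -> exists d, 0 < d /\
      forall y', y' <> (fun _ => 0) -> nrmv (vsub y' y) < d ->
        nrmm (msub (T y') (T y)) < e) /\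
  (forall e, 0 < e -> exists d, 0 < d /\
      forall y, y <> (fun _ => 0) -> nrmv y < d -> nrmm (T y) < e).

Definition J1 (Om : set vecn) (u : vecn -> vecN) (xi : vecN) (x : vecn) (P : matNn) :=
  exists T : vecn -> matNN, admissible_T T /\
  exists d, 0 < d /\ forall z, Om z -> z <> x -> nrmv (vsub z x) < d ->
    mle (vee xi (vsub (vsub (u z) (u x)) (Papp P (vsub z x))))
        (mscale (nrmv (vsub z x)) (T (vsub z x))).

Definition J2 (Om : set vecn) (u : vecn -> vecN) (xi : vecN) (x : vecn)
    (P : matNn) (X : tenN) :=
  symX X /\
  exists T : vecn -> matNN, admissible_T T /\
  exists d, 0 < d /\ forall z, Om z -> z <> x -> nrmv (vsub z x) < d ->
    mle (vee xi (vsub (vsub (vsub (u z) (u x)) (Papp P (vsub z x)))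
                      (fun a => Xcol X (vsub z x) a / 2)))
        (mscale (nrmv (vsub z x) ^+ 2) (T (vsub z x))).

Definition cvgv {k} (s : nat -> 'I_k -> R) (l : 'I_k -> R) :=
  forall e, 0 < e -> exists M, forall m, (M <= m)%N -> nrmv (vsub (s m) l) < e.
Definition cvgm {k l} (s : nat -> 'I_k -> 'I_l -> R) (L : 'I_k -> 'I_l -> R) :=
  forall e, 0 < e -> exists M, forall m, (M <= m)%N -> nrmm (msub (s m) L) < e.
Definition cvgt (s : nat -> tenN) (L : tenN) :=
  forall e, 0 < e -> exists M, forall m, (M <= m)%N -> nrmt (tsub (s m) L) < e.

Definition J1bar (Om : set vecn) (u : vecn -> vecN) (xi : vecN) (x : vecn) (P : matNn) :=
  exists (xis : nat -> vecN) (xs : nat -> vecn) (Ps : nat -> matNn),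
    (forall m, unit_sphere (xis m) /\ Om (xs m) /\ J1 Om u (xis m) (xs m) (Ps m)) /\
    cvgv xis xi /\ cvgv xs x /\ cvgm Ps P.

Definition J2bar (Om : set vecn) (u : vecn -> vecN) (xi : vecN) (x : vecn)
    (P : matNn) (X : tenN) :=
  exists (xis : nat -> vecN) (xs : nat -> vecn) (Ps : nat -> matNn) (Xs : nat -> tenN),
    (forall m, unit_sphere (xis m) /\ Om (xs m) /\ J2 Om u (xis m) (xs m) (Ps m) (Xs m)) /\
    cvgv xis xi /\ cvgv xs x /\ cvgm Ps P /\ cvgt Xs X.

Definition dist2 (x : vecn) (r : vecN) (P : matNn) (X : tenN)
    (y : vecn) (s : vecN) (Q : matNn) (Y : tenN) :=
  Num.sqrt (sqv (vsub x y) + sqv (vsub r s) + sqm (msub P Q) + sqt (tsub X Y)).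
Definition dist1 (x : vecn) (r : vecN) (P : matNn) (y : vecn) (s : vecN) (Q : matNn) :=
  Num.sqrt (sqv (vsub x y) + sqv (vsub r s) + sqm (msub P Q)).

Definition F2type := vecn -> vecN -> matNn -> tenN -> vecN.
Definition F1type := vecn -> vecN -> matNn -> vecN.

(* xi-envelope: limsup_{eps->0} sup { xi^T F(q) : |p - q| <= eps, q in dom F }.
   The inner sup is nondecreasing in eps, so the limsup is the inf over eps > 0. *)
Definition env2 (Om : set vecn) (F : F2type) (xi : vecN)
    (x : vecn) (r : vecN) (P : matNn) (X : tenN) : \bar R :=
  ereal_inf [set ereal_sup [set z | exists y s Q Y, Om y /\ symX Y /\
                 dist2 x r P X y s Q Y <= eps /\ z = (dot xi (F y s Q Y))%:E]
            | eps in [set eps : R | 0 < eps]].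

Definition env1 (Om : set vecn) (F : F1type) (xi : vecN)
    (x : vecn) (r : vecN) (P : matNn) : \bar R :=
  ereal_inf [set ereal_sup [set z | exists y s Q, Om y /\
                 dist1 x r P y s Q <= eps /\ z = (dot xi (F y s Q))%:E]
            | eps in [set eps : R | 0 < eps]].

Definition loc_bdd2 (Om : set vecn) (F : F2type) :=
  forall x r P X, Om x -> symX X -> exists d M, 0 < d /\
    forall y s Q Y, Om y -> symX Y -> dist2 x r P X y s Q Y < d -> nrmv (F y s Q Y) <= M.
Definition loc_bdd1 (Om : set vecn) (F : F1type) :=
  forall x r P, Om x -> exists d M, 0 < d /\
    forall y s Q, Om y -> dist1 x r P y s Q < d -> nrmv (F y s Q) <= M.

Definition cont2 (Om : set vecn) (F : F2type) :=
  forall x r P X, Om x -> symX X -> forall e, 0 < e -> exists d, 0 < d /\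
    forall y s Q Y, Om y -> symX Y -> dist2 x r P X y s Q Y < d ->
      nrmv (vsub (F y s Q Y) (F x r P X)) < e.
Definition cont1 (Om : set vecn) (F : F1type) :=
  forall x r P, Om x -> forall e, 0 < e -> exists d, 0 < d /\
    forall y s Q, Om y -> dist1 x r P y s Q < d ->
      nrmv (vsub (F y s Q) (F x r P)) < e.

Definition contact_sol2 (Om : set vecn) (u : vecn -> vecN) (F : F2type) :=
  forall x xi P X, Om x -> unit_sphere xi -> J2bar Om u xi x P X ->
    (0 <= env2 Om F xi x (u x) P X)%E.
Definition contact_sol1 (Om : set vecn) (u : vecn -> vecN) (F : F1type) :=
  forall x xi P, Om x -> unit_sphere xi -> J1bar Om u xi x P ->
    (0 <= env1 Om F xi x (u x) P)%E.

End Defs.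

From HB Require Import structures.
From mathcomp Require Import all_boot all_order all_algebra.
From mathcomp Require Import all_classical all_reals ereal.
From mathcomp Require Import ring lra.
Import Order.TTheory GRing.Theory Num.Theory.
Set Implicit Arguments. Unset Strict Implicit. Unset Printing Implicit Defensive.
Local Open Scope ring_scope.

(* The xi-envelope of a locally bounded F is upper semicontinuous jointly in
   xi and in the argument: near a limit point F stays bounded, so perturbing xi
   changes xi . F by a uniformly small amount, and small balls around nearby
   points lie in a slightly larger ball around the limit.  A point of the
   closed jet at x is a limit of jets at points x_m -> x, along which
   u(x_m) -> u(x) by continuity, so nonnegativity of the envelope on the jets
   passes to their closure; the converse holds since jets lie in the closure.
   For continuous F the envelope at a point of the domain has the sign of
   xi . F there. *)

Section SquareSums.
Variable R : realType.

Lemma ler_sum_term (I : finType) (F : I -> R) i :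
  (forall j, 0 <= F j) -> F i <= \sum_j F j.
Proof.
by move=> F_ge0; rewrite (bigD1 i) //= lerDl sumr_ge0 // => j _; apply: F_ge0.
Qed.

Lemma ler_sum_quasi (I : finType) (F G H : I -> R) :
  (forall i, F i <= 2 * G i + 2 * H i) ->
  \sum_i F i <= 2 * \sum_i G i + 2 * \sum_i H i.
Proof. by move=> FGH; rewrite !mulr_sumr -big_split ler_sum. Qed.

Lemma sqv_ge0 k (v : 'I_k -> R) : 0 <= sqv v.
Proof. by rewrite sumr_ge0 // => i _; apply: sqr_ge0. Qed.

Lemma sqm_ge0 k l (M : 'I_k -> 'I_l -> R) : 0 <= sqm M.
Proof. by rewrite sumr_ge0 // => i _; apply: sqv_ge0. Qed.

Lemma sqt_ge0 n N (X : tenN R n N) : 0 <= sqt X.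
Proof. by rewrite sumr_ge0 // => a _; apply: sqm_ge0. Qed.

Lemma sqv_subvv k (v : 'I_k -> R) : sqv (vsub v v) = 0.
Proof. by rewrite /sqv big1 // => i _; rewrite /vsub subrr expr0n. Qed.

Lemma sqm_subvv k l (M : 'I_k -> 'I_l -> R) : sqm (msub M M) = 0.
Proof. by rewrite /sqm big1 // => i _; exact: sqv_subvv. Qed.

Lemma sqt_subvv n N (X : tenN R n N) : sqt (tsub X X) = 0.
Proof. by rewrite /sqt big1 // => a _; exact: sqm_subvv. Qed.

Lemma sqv_quasi_tri k (a b c : 'I_k -> R) :
  sqv (vsub a c) <= 2 * sqv (vsub b a) + 2 * sqv (vsub b c).
Proof.
apply: ler_sum_quasi => i; rewrite /vsub -subr_ge0.
have -> : 2 * (b i - a i) ^+ 2 + 2 * (b i - c i) ^+ 2 - (a i - c i) ^+ 2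
        = (2 * b i - a i - c i) ^+ 2 by ring.
exact: sqr_ge0.
Qed.

Lemma sqm_quasi_tri k l (a b c : 'I_k -> 'I_l -> R) :
  sqm (msub a c) <= 2 * sqm (msub b a) + 2 * sqm (msub b c).
Proof. by apply: ler_sum_quasi => i; apply: sqv_quasi_tri. Qed.

Lemma sqt_quasi_tri n N (a b c : tenN R n N) :
  sqt (tsub a c) <= 2 * sqt (tsub b a) + 2 * sqt (tsub b c).
Proof. by apply: ler_sum_quasi => i; apply: sqm_quasi_tri. Qed.

Lemma sqrtrD_le (a b : R) : 0 <= a -> 0 <= b ->
  Num.sqrt (a + b) <= Num.sqrt a + Num.sqrt b.
Proof.
move=> a0 b0; have sa := sqrtr_ge0 a; have sb := sqrtr_ge0 b.
rewrite -(ger0_norm (addr_ge0 sa sb)) -sqrtr_sqr ler_sqrt ?sqr_ge0 //.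
by rewrite sqrrD !sqr_sqrtr // lerD2r lerDl mulrn_wge0 ?mulr_ge0.
Qed.

Lemma sqrt_quasi_tri (S S1 S2 a : R) : 0 <= S1 -> 0 <= S2 ->
  S <= 2 * S1 + 2 * S2 -> Num.sqrt S1 <= a -> Num.sqrt S2 <= a ->
  Num.sqrt S <= 2 * a.
Proof.
move=> S1_ge0 S2_ge0 S_le S1a S2a.
have a_ge0 : 0 <= a := le_trans (sqrtr_ge0 S1) S1a.
rewrite -(ger0_norm (mulr_ge0 (ler0n R 2) a_ge0)) -sqrtr_sqr ler_sqrt ?sqr_ge0 //.
rewrite -(sqr_sqrtr S1_ge0) -(sqr_sqrtr S2_ge0) in S_le.
have := sqrtr_ge0 S1; have := sqrtr_ge0 S2; nra.
Qed.

Lemma normr_coord_le k (v : 'I_k -> R) i : `|v i| <= nrmv v.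
Proof.
rewrite -sqrtr_sqr ler_sqrt ?sqv_ge0 //.
exact: (@ler_sum_term _ (fun j => v j ^+ 2) i (fun _ => sqr_ge0 _)).
Qed.

Lemma normr_coordt_le n N (X : tenN R n N) a i j : `|X a i j| <= nrmt X.
Proof.
rewrite -sqrtr_sqr ler_sqrt ?sqt_ge0 //.
have Xaij := @ler_sum_term _ (fun j => X a i j ^+ 2) j (fun _ => sqr_ge0 _).
have Xai := @ler_sum_term _ (fun i => sqv (X a i)) i (fun _ => sqv_ge0 _).
have Xa := @ler_sum_term _ (fun a => sqm (X a)) a (fun _ => sqm_ge0 _).
exact: le_trans Xaij (le_trans Xai Xa).
Qed.

Lemma dotC k (a b : 'I_k -> R) : dot a b = dot b a.
Proof. by apply: eq_bigr => i _; rewrite mulrC. Qed.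

Lemma dot_subl k (a b c : 'I_k -> R) : dot a c = dot b c + dot (vsub a b) c.
Proof. by rewrite /dot -big_split; apply: eq_bigr => i _; rewrite /vsub /=; ring. Qed.

Lemma dot_subr k (a b c : 'I_k -> R) : dot c a = dot c b + dot c (vsub a b).
Proof. by rewrite !(dotC c) (dot_subl a b). Qed.

Lemma normr_dot_le k (a b : 'I_k -> R) : `|dot a b| <= k%:R * (nrmv a * nrmv b).
Proof.
have ab i : `|a i * b i| <= nrmv a * nrmv b.
  by rewrite normrM ler_pM ?normr_coord_le.
apply: le_trans (ler_norm_sum _ _ _) _.
by apply: le_trans (ler_sum _ (fun i _ => ab i)) _; rewrite sumr_const card_ord mulr_natl.
Qed.

Lemma normr_dot_small k (M del : R) : 0 < del ->
  exists2 e, 0 < e & forall a b : 'I_k -> R,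
    nrmv a < e -> nrmv b <= M -> `|dot a b| <= del.
Proof.
move=> del0; pose c := k%:R * `|M|.
have c0 : 0 <= c by rewrite mulr_ge0.
exists (del / (c + 1)) => [|a b a_small b_le]; first by rewrite divr_gt0 // ltr_pwDr.
have ce : c * (del / (c + 1)) <= del.
  by rewrite mulrA ler_pdivrMr ?ltr_pwDr //; nra.
apply: le_trans (normr_dot_le a b) (le_trans _ ce).
rewrite /c -mulrA ler_wpM2l // mulrC ler_pM ?sqrtr_ge0 ?(ltW a_small) //.
exact: le_trans b_le (ler_norm M).
Qed.

End SquareSums.

Section Limits.
Variable R : realType.

Lemma cvgv_cst k (v : 'I_k -> R) : cvgv (fun=> v) v.
Proof. by move=> e e0; exists 0%N => m _; rewrite /nrmv sqv_subvv sqrtr0. Qed.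

Lemma cvgm_cst k l (M : 'I_k -> 'I_l -> R) : cvgm (fun=> M) M.
Proof. by move=> e e0; exists 0%N => m _; rewrite /nrmm sqm_subvv sqrtr0. Qed.

Lemma cvgt_cst n N (X : tenN R n N) : cvgt (fun=> X) X.
Proof. by move=> e e0; exists 0%N => m _; rewrite /nrmt sqt_subvv sqrtr0. Qed.

Lemma symX_cvgt n N (Xs : nat -> tenN R n N) X :
  cvgt Xs X -> (forall m, symX (Xs m)) -> symX X.
Proof.
move=> cX sX a i j; apply/eqP; rewrite -subr_eq0 -normr_le0; apply/ler_addgt0Pr => e e0.
have [K XK] := cX (e / 2) (divr_gt0 e0 (ltr0n R 2)).
have := le_lt_trans (normr_coordt_le _ a i j) (XK K (leqnn K)).
have := le_lt_trans (normr_coordt_le _ a j i) (XK K (leqnn K)).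
rewrite /tsub sX !ltr_norml => /andP[h1 h2] /andP[h3 h4].
by rewrite add0r ler_norml; apply/andP; split; lra.
Qed.

End Limits.

Section Envelope.
Variables (R : realType) (N : nat) (T : Type).
Variables (D : set T) (dd : T -> T -> R) (G : T -> vecN R N).

Definition envelope (xi : vecN R N) (p : T) : \bar R :=
  ereal_inf [set ereal_sup [set z | exists q, D q /\ dd p q <= eps /\
                 z = (dot xi (G q))%:E]
            | eps in [set eps : R | 0 < eps]].

Lemma envelope_ge0P xi p : (0 <= envelope xi p)%E <->
  forall eps del, 0 < eps -> 0 < del ->
    exists2 q, D q /\ dd p q <= eps & - del < dot xi (G q).
Proof.
split=> [env_ge0 eps del eps0 del0 | near_ge0].
- have sup_ge0 : (0 <= ereal_sup [set z | exists q, D q /\ (dd p q <= eps)%R /\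
                   z = (dot xi (G q))%:E])%E.
    by move/ereal_infP: env_ge0; apply; exists eps.
  have ndel_lt0 : ((- del)%:E < 0)%E by rewrite lte_fin oppr_lt0.
  have [_ [q [Dq [dq ->]]]] := ereal_sup_gt (lt_le_trans ndel_lt0 sup_ge0).
  by rewrite lte_fin; exists q.
- apply/ereal_infP => _ [eps eps0 <-]; apply/lee_addgt0Pr => del del0.
  have [q [Dq dq] xiq] := near_ge0 eps del eps0 del0.
  apply: (@le_trans _ _ (dot xi (G q) + del)%:E); first by rewrite lee_fin; lra.
  by rewrite EFinD; apply: leeD2r; apply: ereal_sup_ubound; exists q.
Qed.

(* A triangle inequality with constant 2 suffices, and it holds for [dist1]
   and [dist2] without Minkowski's inequality. *)
Hypothesis dd_quasi_tri :
  forall p q r a, dd q p <= a -> dd q r <= a -> dd p r <= 2 * a.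

Lemma envelope_ge0_lim xi p (xis : nat -> vecN R N) (ps : nat -> T) :
  (exists d M, 0 < d /\ forall q, D q -> dd p q < d -> nrmv (G q) <= M) ->
  cvgv xis xi ->
  (forall e, 0 < e -> exists K, forall m, (K <= m)%N -> dd (ps m) p <= e) ->
  (forall m, (0 <= envelope (xis m) (ps m))%E) ->
  (0 <= envelope xi p)%E.
Proof.
move=> [d [M [d0 G_bdd]]] cxi cps env_ge0.
apply/envelope_ge0P => eps del eps0 del0.
pose r := Num.min eps (d / 2).
have r2 : 0 < r / 2 by rewrite divr_gt0 // lt_min eps0 divr_gt0.
have [r_eps r_d] : r <= eps /\ r <= d / 2 by split; rewrite ge_min lexx ?orbT.
have del2 : 0 < del / 2 by rewrite divr_gt0.
have [e e0 dot_small] := normr_dot_small N M del2.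
have [K1 xisK] := cxi e e0.
have [K2 psK] := cps (r / 2) r2.
pose m := maxn K1 K2.
have [q [Dq dq] xiq] := (envelope_ge0P _ _).1 (env_ge0 m) _ _ r2 del2.
have dpq := dd_quasi_tri (psK m (leq_maxr _ _)) dq.
have Gq : nrmv (G q) <= M by apply: G_bdd => //; lra.
have := dot_small _ _ (xisK m (leq_maxl _ _)) Gq.
rewrite (dot_subl (xis m) xi) in xiq; rewrite ler_norml => /andP[h1 h2].
by exists q; [split => //; lra | lra].
Qed.

Hypothesis dd_refl : forall p, dd p p = 0.

Lemma envelope_ge0_cont xi p : D p ->
  (forall e, 0 < e -> exists d, 0 < d /\
     forall q, D q -> dd p q < d -> nrmv (vsub (G q) (G p)) < e) ->
  (0 <= envelope xi p)%E <-> 0 <= dot xi (G p).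
Proof.
move=> Dp G_cont; split=> [/envelope_ge0P near_ge0 | dot_ge0].
- apply/ler_addgt0Pr => del del0.
  have del2 : 0 < del / 2 by rewrite divr_gt0.
  have [e e0 dot_small] := normr_dot_small N (nrmv xi) del2.
  have [d [d0 Gd]] := G_cont e e0.
  have d2 : 0 < d / 2 by rewrite divr_gt0.
  have [q [Dq dq] xiq] := near_ge0 _ _ d2 del2.
  have dpq : dd p q < d by lra.
  have := dot_small _ xi (Gd q Dq dpq) (lexx _).
  rewrite dotC ler_norml => /andP[h1 h2].
  rewrite (dot_subr (G q) (G p)) in xiq; lra.
- apply/envelope_ge0P => eps del eps0 del0.
  by exists p; [rewrite dd_refl ltW | lra].
Qed.

End Envelope.

Section SecondOrder.
Variables (R : realType) (n N : nat) (Om : set (vecn R n)) (u : vecn R n -> vecN R N).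

Definition arg2 := (vecn R n * vecN R N * matNn R n N * tenN R n N)%type.
Definition dom2 (q : arg2) := Om q.1.1.1 /\ symX q.2.
Definition adist2 (p q : arg2) :=
  dist2 p.1.1.1 p.1.1.2 p.1.2 p.2 q.1.1.1 q.1.1.2 q.1.2 q.2.
Definition uncurry2 (F : F2type R n N) (q : arg2) := F q.1.1.1 q.1.1.2 q.1.2 q.2.

Lemma env2_envelope F xi x r P X :
  env2 Om F xi x r P X = envelope dom2 adist2 (uncurry2 F) xi (x, r, P, X).
Proof.
congr ereal_inf; apply: eq_imagel => eps _; congr ereal_sup.
apply/seteqP; split=> z /=.
- by move=> [y [s [Q [Y [Omy [sY [dy ->]]]]]]]; exists (y, s, Q, Y).
- by move=> [[[[y s] Q] Y] [[Omy sY] [dy ->]]]; exists y, s, Q, Y.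
Qed.

Lemma adist2_quasi_tri p q r a :
  adist2 q p <= a -> adist2 q r <= a -> adist2 p r <= 2 * a.
Proof.
case: p q r => [[[x1 r1] P1] X1] [[[x2 r2] P2] X2] [[[x3 r3] P3] X3].
apply: sqrt_quasi_tri; rewrite ?addr_ge0 ?sqv_ge0 ?sqm_ge0 ?sqt_ge0 //.
have := sqv_quasi_tri x1 x2 x3; have := sqv_quasi_tri r1 r2 r3.
have := sqm_quasi_tri P1 P2 P3; have := sqt_quasi_tri X1 X2 X3; lra.
Qed.

Lemma adist2_refl p : adist2 p p = 0.
Proof. by rewrite /adist2 /dist2 !sqv_subvv sqm_subvv sqt_subvv !addr0 sqrtr0. Qed.

Lemma dist2_le (x y : vecn R n) (r s : vecN R N) (P Q : matNn R n N)
    (X Y : tenN R n N) : dist2 x r P X y s Q Y <=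
  nrmv (vsub x y) + nrmv (vsub r s) + nrmm (msub P Q) + nrmt (tsub X Y).
Proof.
rewrite /dist2; apply: le_trans (sqrtrD_le _ _) _;
  rewrite ?addr_ge0 ?sqv_ge0 ?sqm_ge0 ?sqt_ge0 // lerD2r.
apply: le_trans (sqrtrD_le _ _) _; rewrite ?addr_ge0 ?sqv_ge0 ?sqm_ge0 // lerD2r.
exact: sqrtrD_le (sqv_ge0 _) (sqv_ge0 _).
Qed.

Lemma J2_J2bar x xi P X :
  Om x -> unit_sphere xi -> J2 Om u xi x P X -> J2bar Om u xi x P X.
Proof.
move=> Omx xi1 J; exists (fun=> xi), (fun=> x), (fun=> P), (fun=> X).
split=> [//|]; split; first exact: cvgv_cst.
by split; [exact: cvgv_cst | split; [exact: cvgm_cst | exact: cvgt_cst]].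
Qed.

Lemma env2_ge0_cont (F : F2type R n N) xi x r P X : cont2 Om F -> Om x -> symX X ->
  (0 <= env2 Om F xi x r P X)%E <-> 0 <= dot xi (F x r P X).
Proof.
move=> F_cont Omx sX; rewrite env2_envelope.
apply: (envelope_ge0_cont adist2_refl) => // e e0.
have [d [d0 Fd]] := F_cont x r P X Omx sX e e0.
by exists d; split=> // -[[[y s] Q] Y] [Omy sY]; apply: Fd.
Qed.

Hypothesis u_cont : cont_on Om u.

Lemma adist2_jets_cvg x xs Ps Xs P X : Om x -> (forall m, Om (xs m)) ->
  cvgv xs x -> cvgm Ps P -> cvgt Xs X ->
  forall e, 0 < e -> exists K, forall m, (K <= m)%N ->
    adist2 (xs m, u (xs m), Ps m, Xs m) (x, u x, P, X) <= e.
Proof.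
move=> Omx Omxs cx cP cX e e0.
have e4 : 0 < e / 4 by rewrite divr_gt0.
have [d [d0 ud]] := u_cont Omx e4.
have de4 : 0 < Num.min d (e / 4) by rewrite lt_min d0 e4.
have [K1 xsK] := cx _ de4.
have [K2 PsK] := cP _ e4; have [K3 XsK] := cX _ e4.
exists (maxn K1 (maxn K2 K3)) => m; rewrite !geq_max => /and3P[/xsK + /PsK hP /XsK hX].
rewrite lt_min => /andP[/(ud _ (Omxs m)) hu hx].
by apply: le_trans (dist2_le _ _ _ _ _ _ _ _) _; lra.
Qed.

Lemma env2_ge0_J2bar (F : F2type R n N) : loc_bdd2 Om F ->
  (forall x xi P X, Om x -> unit_sphere xi -> J2 Om u xi x P X ->
     (0 <= env2 Om F xi x (u x) P X)%E) ->
  forall x xi P X, Om x -> J2bar Om u xi x P X ->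
     (0 <= env2 Om F xi x (u x) P X)%E.
Proof.
move=> F_bdd env_ge0 x xi P X Omx [xis [xs [Ps [Xs [jets [cxi [cx [cP cX]]]]]]]].
have sX : symX X := symX_cvgt cX (fun m => (jets m).2.2.1).
rewrite env2_envelope; apply: (envelope_ge0_lim adist2_quasi_tri _ cxi
  (adist2_jets_cvg Omx (fun m => (jets m).2.1) cx cP cX)).
- have [d [M [d0 FM]]] := F_bdd x (u x) P X Omx sX.
  by exists d, M; split=> // -[[[y s] Q] Y] [Omy sY]; apply: FM.
- move=> m; rewrite -env2_envelope; have [xi1 [Omxm J]] := jets m.
  exact: env_ge0.
Qed.

Lemma contact_sol2_iff_J2 (F : F2type R n N) : loc_bdd2 Om F ->
  contact_sol2 Om u F <->
  (forall x xi P X, Om x -> unit_sphere xi -> J2 Om u xi x P X ->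
     (0 <= env2 Om F xi x (u x) P X)%E).
Proof.
move=> F_bdd; split=> [sol x xi P X Omx xi1 J | env_ge0 x xi P X Omx _].
- by apply: sol => //; apply: J2_J2bar.
- exact: env2_ge0_J2bar.
Qed.

End SecondOrder.

Section FirstOrder.
Variables (R : realType) (n N : nat) (Om : set (vecn R n)) (u : vecn R n -> vecN R N).

Definition arg1 := (vecn R n * vecN R N * matNn R n N)%type.
Definition dom1 (q : arg1) := Om q.1.1.
Definition adist1 (p q : arg1) := dist1 p.1.1 p.1.2 p.2 q.1.1 q.1.2 q.2.
Definition uncurry1 (F : F1type R n N) (q : arg1) := F q.1.1 q.1.2 q.2.

Lemma env1_envelope F xi x r P :
  env1 Om F xi x r P = envelope dom1 adist1 (uncurry1 F) xi (x, r, P).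
Proof.
congr ereal_inf; apply: eq_imagel => eps _; congr ereal_sup.
apply/seteqP; split=> z /=.
- by move=> [y [s [Q [Omy [dy ->]]]]]; exists (y, s, Q).
- by move=> [[[y s] Q] [Omy [dy ->]]]; exists y, s, Q.
Qed.

Lemma adist1_quasi_tri p q r a :
  adist1 q p <= a -> adist1 q r <= a -> adist1 p r <= 2 * a.
Proof.
case: p q r => [[x1 r1] P1] [[x2 r2] P2] [[x3 r3] P3].
apply: sqrt_quasi_tri; rewrite ?addr_ge0 ?sqv_ge0 ?sqm_ge0 //.
have := sqv_quasi_tri x1 x2 x3; have := sqv_quasi_tri r1 r2 r3.
have := sqm_quasi_tri P1 P2 P3; lra.
Qed.

Lemma adist1_refl p : adist1 p p = 0.
Proof. by rewrite /adist1 /dist1 !sqv_subvv sqm_subvv !addr0 sqrtr0. Qed.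

Lemma dist1_le (x y : vecn R n) (r s : vecN R N) (P Q : matNn R n N) :
  dist1 x r P y s Q <= nrmv (vsub x y) + nrmv (vsub r s) + nrmm (msub P Q).
Proof.
rewrite /dist1; apply: le_trans (sqrtrD_le _ _) _;
  rewrite ?addr_ge0 ?sqv_ge0 ?sqm_ge0 // lerD2r.
exact: sqrtrD_le (sqv_ge0 _) (sqv_ge0 _).
Qed.

Lemma J1_J1bar x xi P :
  Om x -> unit_sphere xi -> J1 Om u xi x P -> J1bar Om u xi x P.
Proof.
move=> Omx xi1 J; exists (fun=> xi), (fun=> x), (fun=> P).
split=> [//|]; split; first exact: cvgv_cst.
by split; [exact: cvgv_cst | exact: cvgm_cst].
Qed.

Lemma env1_ge0_cont (F : F1type R n N) xi x r P : cont1 Om F -> Om x ->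
  (0 <= env1 Om F xi x r P)%E <-> 0 <= dot xi (F x r P).
Proof.
move=> F_cont Omx; rewrite env1_envelope.
apply: (envelope_ge0_cont adist1_refl) => // e e0.
have [d [d0 Fd]] := F_cont x r P Omx e e0.
by exists d; split=> // -[[y s] Q] Omy; apply: Fd.
Qed.

Hypothesis u_cont : cont_on Om u.

Lemma adist1_jets_cvg x xs Ps P : Om x -> (forall m, Om (xs m)) ->
  cvgv xs x -> cvgm Ps P ->
  forall e, 0 < e -> exists K, forall m, (K <= m)%N ->
    adist1 (xs m, u (xs m), Ps m) (x, u x, P) <= e.
Proof.
move=> Omx Omxs cx cP e e0.
have e3 : 0 < e / 3 by rewrite divr_gt0.
have [d [d0 ud]] := u_cont Omx e3.
have de3 : 0 < Num.min d (e / 3) by rewrite lt_min d0 e3.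
have [K1 xsK] := cx _ de3; have [K2 PsK] := cP _ e3.
exists (maxn K1 K2) => m; rewrite geq_max => /andP[/xsK + /PsK hP].
rewrite lt_min => /andP[/(ud _ (Omxs m)) hu hx].
by apply: le_trans (dist1_le _ _ _ _ _ _) _; lra.
Qed.

Lemma env1_ge0_J1bar (F : F1type R n N) : loc_bdd1 Om F ->
  (forall x xi P, Om x -> unit_sphere xi -> J1 Om u xi x P ->
     (0 <= env1 Om F xi x (u x) P)%E) ->
  forall x xi P, Om x -> J1bar Om u xi x P ->
     (0 <= env1 Om F xi x (u x) P)%E.
Proof.
move=> F_bdd env_ge0 x xi P Omx [xis [xs [Ps [jets [cxi [cx cP]]]]]].
rewrite env1_envelope; apply: (envelope_ge0_lim adist1_quasi_tri _ cxi
  (adist1_jets_cvg Omx (fun m => (jets m).2.1) cx cP)).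
- have [d [M [d0 FM]]] := F_bdd x (u x) P Omx.
  by exists d, M; split=> // -[[y s] Q] Omy; apply: FM.
- move=> m; rewrite -env1_envelope; have [xi1 [Omxm J]] := jets m.
  exact: env_ge0.
Qed.

Lemma contact_sol1_iff_J1 (F : F1type R n N) : loc_bdd1 Om F ->
  contact_sol1 Om u F <->
  (forall x xi P, Om x -> unit_sphere xi -> J1 Om u xi x P ->
     (0 <= env1 Om F xi x (u x) P)%E).
Proof.
move=> F_bdd; split=> [sol x xi P Omx xi1 J | env_ge0 x xi P Omx _].
- by apply: sol => //; apply: J1_J1bar.
- exact: env1_ge0_J1bar.
Qed.

End FirstOrder.

Theorem lemma12 (R : realType) (n N : nat) (Om : set (vecn R n))
    (u : vecn R n -> vecN R N) :
  open_set Om -> cont_on Om u ->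
  (forall F : F2type R n N, loc_bdd2 Om F ->
     (contact_sol2 Om u F <->
        (forall x xi P X, Om x -> unit_sphere xi -> J2 Om u xi x P X ->
           (0 <= env2 Om F xi x (u x) P X)%E)) /\
     (cont2 Om F ->
       (contact_sol2 Om u F <->
        (forall x xi P X, Om x -> unit_sphere xi -> J2 Om u xi x P X ->
           0 <= dot xi (F x (u x) P X))))) /\
  (forall F : F1type R n N, loc_bdd1 Om F ->
     (contact_sol1 Om u F <->
        (forall x xi P, Om x -> unit_sphere xi -> J1 Om u xi x P ->
           (0 <= env1 Om F xi x (u x) P)%E)) /\
     (cont1 Om F ->
       (contact_sol1 Om u F <->
        (forall x xi P, Om x -> unit_sphere xi -> J1 Om u xi x P ->
           0 <= dot xi (F x (u x) P))))).
Proof.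
move=> _ u_cont; split=> F F_bdd.
- have sol_iff := contact_sol2_iff_J2 u_cont F_bdd.
  split=> // F_cont; apply: iff_trans sol_iff _.
  split=> H x xi P X Omx xi1 J; have [sX _] := J;
    by apply/(env2_ge0_cont _ _ _ F_cont Omx sX); apply: H.
- have sol_iff := contact_sol1_iff_J1 u_cont F_bdd.
  split=> // F_cont; apply: iff_trans sol_iff _.
  split=> H x xi P Omx xi1 J;
    by apply/(env1_ge0_cont _ _ _ F_cont Omx); apply: H.
Qed.
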